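(* Let $N$ be a plain structural conflict Petri net. If $N$ has a fully reachable pure $\mathsf M$, then $N$ is not distributable up to step failures equivalence, i.e. there is no distributed Petri net $D$ with $D\approx_{\mathscr F}N$.
   Context: Fix a set $\mathrm{Act}$ of visible actions and an invisible action $\tau\notin\mathrm{Act}$. A (labelled) Petri net is $N=(S,T,F,M_0,\ell)$ with $S,T$ disjoint, $F:(S\times T)\cup(T\times S)\to\mathbb N$, $M_0\in\mathbb N^S$, $\ell:T\to\mathrm{Act}\cup\{\tau\}$. ${}^\bullet x(y)=F(y,x)$, $x^\bullet(y)=F(x,y)$, extended additively to finite multisets; multiset $\le,\cap,\cup$ pointwise $\le$, min, max. For finite nonempty multiset $G$ of transitions, $M[G\rangle M'$ iff ${}^\bullet G\le M$ and $M'=M-{}^\bullet G+G^\bullet$. Reachable markings: closure of $\{M_0\}$ under steps. $t\smile u$ iff $M[\{t\}+\{u\}\rangle$ for a reachable $M$. Structural conflict net: $t\smile u\Rightarrow{}^\bullet t\cap{}^\bullet u=\emptyset$. Plain: $\ell$ injective and never $\tau$. Fully reachable pure $\mathsf M$: $t,u,v\in T$ with ${}^\bullet t\cap{}^\bullet u\neq\emptyset$, ${}^\bullet u\cap{}^\bullet v\neq\emptyset$, ${}^\bullet t\cap{}^\bullet v=\emptyset$, and a reachable $M$ with ${}^\bullet t\cup{}^\bullet u\cup{}^\bullet v\le M$. Distributed net: there is a function $D$ on $S\cup T$ with (1) $s\in{}^\bullet t\Rightarrow D(t)=D(s)$, (2) $t\smile u\Rightarrow D(t)\neq D(u)$. Step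 failures equivalence: $M\xrightarrow{\alpha}M'$ iff $M[t\rangle M'$ with $\ell(t)=\alpha$; $\Rightarrow$ is the reflexive transitive closure of $\xrightarrow{\tau}$; $M\overset{a_1\cdots a_n}{\Longrightarrow}M'$ iff $M\Rightarrow\xrightarrow{a_1}\Rightarrow\cdots\xrightarrow{a_n}\Rightarrow M'$. For a step $A$ (finite nonempty multiset over $\mathrm{Act}$), $M\xrightarrow{A}$ iff $M[G\rangle$ for a finite multiset $G$ of transitions, none labelled $\tau$, whose label multiset is $A$. $(\sigma,X)$, $\sigma\in\mathrm{Act}^*$, $X$ a finite set of steps, is a step failure pair iff some $M$ has $M_0\overset{\sigma}{\Longrightarrow}M$, $M\not\xrightarrow{\tau}$, and $M\not\xrightarrow{A}$ for all $A\in X$. $N_1\approx_{\mathscr F}N_2$ iff they have the same step failure pairs. *)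

From Stdlib Require Import List Permutation Arith.
Import ListNotations.

Section PetriNets.
Variable Act : Type.  (* visible actions; tau is represented by [None] *)

(* N = (S, T, F, M0, l); F is split into pre (S x T) and post (T x S). *)
Record net := mkNet {
  place : Type;
  trans : Type;
  pre   : place -> trans -> nat;
  post  : trans -> place -> nat;
  m0    : place -> nat;
  lab   : trans -> option Act
}.

Definition marking (N : net) := place N -> nat.

(* finite multisets of transitions are represented by lists *)
Definition presetG (N : net) (G : list (trans N)) : marking N :=
  fun s => fold_right (fun t acc => pre N s t + acc) 0 G.
Definition postsetG (N : net) (G : list (trans N)) : marking N :=
  fun s => fold_right (fun t acc => post N t s + acc) 0 G.

Definition mle (N : net) (M M' : marking N) : Prop := forall s, M s <= M' s.

Definition fires (N : net) (M : marking N) (G : list (trans N)) (M' : marking N) : Prop :=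
  G <> [] /\ mle N (presetG N G) M /\
  forall s, M' s = M s - presetG N G s + postsetG N G s.

Inductive reachable (N : net) : marking N -> Prop :=
| reach_init : reachable N (m0 N)
| reach_step : forall M G M', reachable N M -> fires N M G M' -> reachable N M'.

Definition concurrent (N : net) (t u : trans N) : Prop :=
  exists M, reachable N M /\ mle N (presetG N [t; u]) M.

Definition structural_conflict (N : net) : Prop :=
  forall t u : trans N, concurrent N t u -> forall s, pre N s t = 0 \/ pre N s u = 0.

Definition plain (N : net) : Prop :=
  (forall t, lab N t <> None) /\ (forall t u, lab N t = lab N u -> t = u).

Definition fully_reachable_pure_M (N : net) : Prop :=
  exists t u v : trans N,
    (exists s, 0 < pre N s t /\ 0 < pre N s u) /\
    (exists s, 0 < pre N s u /\ 0 < pre N s v) /\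
    (forall s, pre N s t = 0 \/ pre N s v = 0) /\
    exists M, reachable N M /\
      forall s, Nat.max (Nat.max (pre N s t) (pre N s u)) (pre N s v) <= M s.

Definition distributed (N : net) : Prop :=
  exists (Loc : Type) (D : place N + trans N -> Loc),
    (forall s t, 0 < pre N s t -> D (inr t) = D (inl s)) /\
    (forall t u, concurrent N t u -> D (inr t) <> D (inr u)).

Definition step1 (N : net) (M : marking N) (a : option Act) (M' : marking N) : Prop :=
  exists t, lab N t = a /\ fires N M [t] M'.

Inductive tau_star (N : net) : marking N -> marking N -> Prop :=
| tau_refl : forall M, tau_star N M M
| tau_next : forall M M1 M', step1 N M None M1 -> tau_star N M1 M' -> tau_star N M M'.

Inductive wtrace (N : net) : list Act -> marking N -> marking N -> Prop :=
| wt_nil : forall M M', tau_star N M M' -> wtrace N [] M M'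
| wt_cons : forall a sigma M M1 M2 M',
    tau_star N M M1 -> step1 N M1 (Some a) M2 -> wtrace N sigma M2 M' ->
    wtrace N (a :: sigma) M M'.

(* M --A--> for a step A (finite nonempty multiset over Act, given as a list) *)
Definition step_enabled (N : net) (M : marking N) (A : list Act) : Prop :=
  exists G : list (trans N), G <> [] /\
    Permutation (map (lab N) G) (map (@Some Act) A) /\ mle N (presetG N G) M.

Definition step_failure (N : net) (sigma : list Act) (X : list (list Act)) : Prop :=
  Forall (fun A => A <> []) X /\
  exists M, wtrace N sigma (m0 N) M /\
    ~ (exists M', step1 N M None M') /\
    Forall (fun A => ~ step_enabled N M A) X.

Definition sf_equiv (N1 N2 : net) : Prop :=
  forall sigma X, step_failure N1 sigma X <-> step_failure N2 sigma X.

End PetriNets.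

(* Let t, u, v form the pure M, with labels a, b, c, enabled together at a reachable marking M of N,
   reached by the visible trace sigma.  There N offers the steps {b} and {a,c} but, by structural
   conflict, refuses {a,b} and {b,c}.  A step failures equivalent D has a stable marking M' after
   sigma refusing {a,b} and {b,c}; since N is plain, its marking after sigma is unique, so M' must
   still offer {b} and {a,c}, through transitions u', t', v'.  In D two individually enabled
   transitions whose joint step is refused share an input place, hence a location: t' and v' are
   co-located with u', yet concurrent, which a distribution forbids. *)
From Stdlib Require Import List Permutation Lia Classical FunctionalExtensionality.
Import ListNotations.

Lemma Permutation_map_singleton_inv {A B : Type} (f : A -> B) (l : list A) (y : B) :
  Permutation (map f l) [y] -> exists x, l = [x] /\ f x = y.
Proof.
  intros H. apply Permutation_sym, Permutation_length_1_inv in H.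
  destruct l as [|x [|? ?]]; simpl in H; try discriminate.
  injection H as Hx. eauto.
Qed.

Lemma Permutation_map_pair_inv {A B : Type} (f : A -> B) (l : list A) (y1 y2 : B) :
  Permutation (map f l) [y1; y2] ->
  exists x1 x2, l = [x1; x2] /\ (f x1 = y1 /\ f x2 = y2 \/ f x1 = y2 /\ f x2 = y1).
Proof.
  intros H. apply Permutation_sym in H.
  destruct (Permutation_length_2_inv H) as [E|E];
    destruct l as [|x1 [|x2 [|? ?]]]; simpl in E; try discriminate;
    injection E as E1 E2; exists x1, x2; auto.
Qed.

Section Nets.
Variables (Act : Type) (N : net Act).

Lemma tau_star_trans M1 M2 M3 :
  tau_star Act N M1 M2 -> tau_star Act N M2 M3 -> tau_star Act N M1 M3.
Proof. induction 1; intros; [assumption | eapply tau_next; eauto]. Qed.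

Lemma wtrace_tau_star_l sigma M1 M2 M3 :
  tau_star Act N M1 M2 -> wtrace Act N sigma M2 M3 -> wtrace Act N sigma M1 M3.
Proof.
  intros H1 H2. destruct H2.
  - constructor. eapply tau_star_trans; eauto.
  - eapply wt_cons; [eapply tau_star_trans; eauto | eauto | eauto].
Qed.

Lemma wtrace_app sigma1 sigma2 M1 M2 M3 :
  wtrace Act N sigma1 M1 M2 -> wtrace Act N sigma2 M2 M3 ->
  wtrace Act N (sigma1 ++ sigma2) M1 M3.
Proof.
  intros H1. revert M3. induction H1; intros M3 H2; simpl.
  - eapply wtrace_tau_star_l; eauto.
  - eapply wt_cons; eauto.
Qed.

Lemma step1_reachable M a M' : step1 Act N M a M' -> reachable Act N M -> reachable Act N M'.
Proof. intros [t [_ Hf]] HM. eapply reach_step; eauto. Qed.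

Lemma tau_star_reachable M M' :
  tau_star Act N M M' -> reachable Act N M -> reachable Act N M'.
Proof. induction 1; intros; eauto using step1_reachable. Qed.

Lemma wtrace_reachable sigma M M' :
  wtrace Act N sigma M M' -> reachable Act N M -> reachable Act N M'.
Proof. induction 1; eauto using tau_star_reachable, step1_reachable. Qed.

Lemma mle_presetG_pair_l M x y :
  mle Act N (presetG Act N [x; y]) M -> mle Act N (presetG Act N [x]) M.
Proof. intros H s. specialize (H s). simpl in *. lia. Qed.

Lemma mle_presetG_pair_r M x y :
  mle Act N (presetG Act N [x; y]) M -> mle Act N (presetG Act N [y]) M.
Proof. intros H s. specialize (H s). simpl in *. lia. Qed.

Lemma step_enabled_singleton M u b :
  lab Act N u = Some b -> mle Act N (presetG Act N [u]) M -> step_enabled Act N M [b].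
Proof.
  intros Hu HM. exists [u]. split; [discriminate|]. split; [|exact HM].
  simpl. rewrite Hu. reflexivity.
Qed.

Lemma step_enabled_pair_disjoint M x y a b :
  lab Act N x = Some a -> lab Act N y = Some b ->
  mle Act N (presetG Act N [x]) M -> mle Act N (presetG Act N [y]) M ->
  (forall s, pre Act N s x = 0 \/ pre Act N s y = 0) ->
  step_enabled Act N M [a; b].
Proof.
  intros Hx Hy HMx HMy Hdisj. exists [x; y]. split; [discriminate|]. split.
  - simpl. rewrite Hx, Hy. reflexivity.
  - intros s. specialize (HMx s). specialize (HMy s). specialize (Hdisj s).
    simpl in *. lia.
Qed.

Lemma step_enabled_singleton_inv M b :
  step_enabled Act N M [b] ->
  exists u, lab Act N u = Some b /\ mle Act N (presetG Act N [u]) M.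
Proof.
  intros [G [_ [HG HM]]].
  destruct (Permutation_map_singleton_inv _ _ _ HG) as [u [-> Hu]]. eauto.
Qed.

Lemma step_enabled_pair_inv M a b :
  step_enabled Act N M [a; b] ->
  exists x y, lab Act N x = Some a /\ lab Act N y = Some b /\
    mle Act N (presetG Act N [x; y]) M.
Proof.
  intros [G [_ [HG HM]]].
  destruct (Permutation_map_pair_inv _ _ _ _ HG) as [x [y [-> [[Hx Hy]|[Hx Hy]]]]].
  - eauto.
  - exists y, x. repeat split; auto.
    intros s. specialize (HM s). simpl in *. lia.
Qed.

End Nets.

Section PlainNets.
Variables (Act : Type) (N : net Act).
Hypothesis N_plain : plain Act N.

Lemma plain_tau_star_eq M M' : tau_star Act N M M' -> M' = M.
Proof.
  destruct 1 as [|M M1 M' [t [Ht _]]]; [reflexivity|].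
  exfalso. exact (proj1 N_plain t Ht).
Qed.

Lemma plain_stable M : ~ exists M', step1 Act N M None M'.
Proof. intros [M' [t [Ht _]]]. exact (proj1 N_plain t Ht). Qed.

Lemma plain_step1_functional M a M1 M2 :
  step1 Act N M a M1 -> step1 Act N M a M2 -> M1 = M2.
Proof.
  intros [t [Ht [_ [_ H1]]]] [u [Hu [_ [_ H2]]]].
  assert (t = u) as <- by (apply (proj2 N_plain); congruence).
  apply functional_extensionality. intros s. rewrite H1, H2. reflexivity.
Qed.

Lemma plain_wtrace_functional sigma M M1 M2 :
  wtrace Act N sigma M M1 -> wtrace Act N sigma M M2 -> M1 = M2.
Proof.
  intros H1. revert M2. induction H1 as [M M1 HM1|a sigma M M1 M2 M3 HM1 Hs1 _ IH];
    intros M' H2; inversion H2 as [? ? HM2|? ? ? M1' M2' ? HM1' Hs2 Hw2]; subst.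
  - rewrite (plain_tau_star_eq _ _ HM1), (plain_tau_star_eq _ _ HM2). reflexivity.
  - rewrite (plain_tau_star_eq _ _ HM1) in Hs1. rewrite (plain_tau_star_eq _ _ HM1') in Hs2.
    apply IH. rewrite (plain_step1_functional _ _ _ _ Hs1 Hs2). exact Hw2.
Qed.

Lemma plain_wtrace_of_step G M :
  mle Act N (presetG Act N G) M ->
  exists sigma, wtrace Act N sigma M
    (fun s => M s - presetG Act N G s + postsetG Act N G s).
Proof.
  revert M. induction G as [|g G IH]; intros M HM.
  - exists []. replace (fun s => M s - presetG Act N [] s + postsetG Act N [] s) with M.
    + repeat constructor.
    + apply functional_extensionality. intros s. simpl. lia.
  - set (M1 := fun s => M s - pre Act N s g + post Act N g s).
    destruct (IH M1) as [sigma Hsigma].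
    { intros s. specialize (HM s). simpl in HM. unfold M1. lia. }
    destruct (lab Act N g) as [a|] eqn:Hg; [|exfalso; exact (proj1 N_plain g Hg)].
    exists (a :: sigma). apply (wt_cons _ _ a sigma M M M1); [constructor| |].
    + exists g. split; [exact Hg|]. split; [discriminate|]. split.
      * intros s. specialize (HM s). simpl in *. lia.
      * intros s. unfold M1, presetG, postsetG. simpl. lia.
    + replace (fun s => M s - presetG Act N (g :: G) s + postsetG Act N (g :: G) s)
        with (fun s => M1 s - presetG Act N G s + postsetG Act N G s); [exact Hsigma|].
      apply functional_extensionality. intros s. specialize (HM s).
      simpl in *. unfold M1. lia.
Qed.

Lemma plain_reachable_wtrace M :
  reachable Act N M -> exists sigma, wtrace Act N sigma (m0 Act N) M.
Proof.
  induction 1 as [|M G M' _ [sigma1 H1] [_ [HG HM']]].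
  - exists []. repeat constructor.
  - destruct (plain_wtrace_of_step G M HG) as [sigma2 H2].
    replace (fun s => M s - presetG Act N G s + postsetG Act N G s) with M' in H2
      by (apply functional_extensionality; intros s; rewrite HM'; reflexivity).
    exists (sigma1 ++ sigma2). eapply wtrace_app; eauto.
Qed.

Lemma structural_conflict_refuses_pair M t u a b s :
  structural_conflict Act N -> reachable Act N M ->
  lab Act N t = Some a -> lab Act N u = Some b ->
  0 < pre Act N s t -> 0 < pre Act N s u ->
  ~ step_enabled Act N M [a; b].
Proof.
  intros Hsc HM Ht Hu Hst Hsu Hen.
  destruct (step_enabled_pair_inv _ _ _ _ _ Hen) as [t' [u' [Ht' [Hu' Hle]]]].
  assert (t' = t) as -> by (apply (proj2 N_plain); congruence).
  assert (u' = u) as -> by (apply (proj2 N_plain); congruence).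
  destruct (Hsc t u (ex_intro _ M (conj HM Hle)) s); lia.
Qed.

(* Refusals after sigma in a net step failures equivalent to N are also refusals of N,
   whose marking after sigma is unique. *)
Lemma sf_equiv_plain_step_enabled D sigma M MD A :
  sf_equiv Act D N -> A <> [] ->
  wtrace Act N sigma (m0 Act N) M -> wtrace Act D sigma (m0 Act D) MD ->
  ~ (exists M', step1 Act D MD None M') ->
  step_enabled Act N M A -> step_enabled Act D MD A.
Proof.
  intros Heq HA HM HMD Hstable Hen. apply NNPP. intros Hrefuse.
  assert (Hfail : step_failure Act D sigma [A]).
  { split; [repeat constructor; exact HA|]. exists MD. repeat split; auto. }
  apply Heq in Hfail as [_ [M' [HM' [_ Hrefuses]]]].
  rewrite (plain_wtrace_functional _ _ _ _ HM' HM) in Hrefuses.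
  inversion Hrefuses. contradiction.
Qed.

End PlainNets.

Section DistributedNets.
Variables (Act : Type) (D : net Act) (Loc : Type) (loc : place Act D + trans Act D -> Loc).
Hypothesis loc_preset : forall s t, 0 < pre Act D s t -> loc (inr t) = loc (inl s).

Lemma refused_pair_colocated M x y a b :
  lab Act D x = Some a -> lab Act D y = Some b ->
  mle Act D (presetG Act D [x]) M -> mle Act D (presetG Act D [y]) M ->
  ~ step_enabled Act D M [a; b] -> loc (inr x) = loc (inr y).
Proof.
  intros Hx Hy HMx HMy Hrefuse.
  destruct (classic (forall s, pre Act D s x = 0 \/ pre Act D s y = 0)) as [Hdisj|Hshare].
  - exfalso. apply Hrefuse. eapply step_enabled_pair_disjoint; eauto.
  - apply not_all_ex_not in Hshare as [s Hs].
    rewrite (loc_preset s x), (loc_preset s y); [reflexivity | lia | lia].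
Qed.

End DistributedNets.

Theorem theorem5p6 (Act : Type) (N : net Act) :
  plain Act N -> structural_conflict Act N -> fully_reachable_pure_M Act N ->
  ~ (exists D : net Act, distributed Act D /\ sf_equiv Act D N).
Proof.
  intros Hplain Hsc [t [u [v [[s1 [Hs1t Hs1u]] [[s2 [Hs2u Hs2v]] [Htv [M [HM HMle]]]]]]]]
    [D [[Loc [loc [Hloc Hconc]]] Heq]].
  destruct (lab Act N t) as [a|] eqn:Ha; [|exact (proj1 Hplain t Ha)].
  destruct (lab Act N u) as [b|] eqn:Hb; [|exact (proj1 Hplain u Hb)].
  destruct (lab Act N v) as [c|] eqn:Hc; [|exact (proj1 Hplain v Hc)].
  assert (Hcover : forall w, In w [t; u; v] -> mle Act N (presetG Act N [w]) M).
  { intros w Hw s. specialize (HMle s). simpl in *. intuition (subst; lia). }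
  destruct (plain_reachable_wtrace Act N Hplain M HM) as [sigma Hsigma].
  assert (Hfail : step_failure Act N sigma [[a; b]; [b; c]]).
  { split; [repeat constructor; discriminate|].
    exists M. split; [exact Hsigma|]. split; [apply plain_stable, Hplain|].
    repeat constructor; eapply structural_conflict_refuses_pair; eauto. }
  apply Heq in Hfail as [_ [MD [HMD [Hstable Hrefuses]]]].
  inversion Hrefuses as [|? ? Hrefuse_ab Hrefuses']. inversion Hrefuses' as [|? ? Hrefuse_bc _].
  destruct (step_enabled_singleton_inv Act D MD b) as [u' [Hu' Hu'M]].
  { eapply sf_equiv_plain_step_enabled; eauto; [discriminate|].
    eapply step_enabled_singleton; eauto; apply Hcover; simpl; auto. }
  destruct (step_enabled_pair_inv Act D MD a c) as [t' [v' [Ht' [Hv' Ht'v'M]]]].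
  { eapply sf_equiv_plain_step_enabled; eauto; [discriminate|].
    eapply step_enabled_pair_disjoint; eauto; apply Hcover; simpl; auto. }
  apply (Hconc t' v').
  - exists MD. split; [eapply wtrace_reachable; eauto; constructor | exact Ht'v'M].
  - rewrite (refused_pair_colocated Act D Loc loc Hloc MD t' u' a b),
      (refused_pair_colocated Act D Loc loc Hloc MD u' v' b c);
      eauto using mle_presetG_pair_l, mle_presetG_pair_r.
Qed.
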